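(* Let $1\le k\le\ell\le\lfloor n/2\rfloor$, $\lambda=(n-k,k)$, $\mu=(n-\ell,\ell)$, and let $P$ be the random transpositions chain on $\mathcal{T}_{\lambda,\mu}$ with stationary distribution $\pi_{\lambda,\mu}$. If $c>0$ and $t=(n/4)(\log(k)+c)$, then \[ \sum_{\mathbf{x}\in\mathcal{T}_{\lambda,\mu}}\pi_{\lambda,\mu}(\mathbf{x})\,\|P^t(\mathbf{x},\cdot)-\pi_{\lambda,\mu}\|_{TV}^2\le e^{-c}. \] If $t=cn/4$, then \[ \sum_{\mathbf{x}\in\mathcal{T}_{\lambda,\mu}}\pi_{\lambda,\mu}(\mathbf{x})\,\chi^2_{\mathbf{x}}(t)\ge 1-c. \]
   Context: $\mathcal{T}_{\lambda,\mu}$ is the set of $2\times2$ nonnegative integer tables with row sums $n-k,k$ and column sums $n-\ell,\ell$. The Fisher–Yates distribution is $\pi_{\lambda,\mu}(T)=\frac1{n!}\prod_{i,j}\frac{\lambda_i!\mu_j!}{T_{ij}!}$. The random transpositions chain: for $T'$ obtained from $T$ by subtracting $1$ at cells $(i_1,j_1),(i_2,j_2)$ and adding $1$ at $(i_1,j_2),(i_2,j_1)$ (with $i_1\ne i_2$, $j_1\ne j_2$), $P(T,T')=2T_{i_1j_1}T_{i_2j_2}/n^2$; $P(T,T)$ is the remaining mass. $\|\nu-\pi\|_{TV}=\sup_A|\nu(A)-\pi(A)|$ and $\chi^2_{\mathbf{x}}(t)=\sum_{\mathbf{y}}\frac{(P^t(\mathbf{x},\mathbf{y})-\pi_{\lambda,\mu}(\mathbf{y}))^2}{\pi_{\lambda,\mu}(\mathbf{y})}$.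 *)

From HB Require Import structures.
From mathcomp Require Import all_boot all_order all_algebra.
From mathcomp Require Import all_classical all_reals all_analysis.
Unset Printing Implicit Defensive.
Import Order.TTheory GRing.Theory Num.Theory.
Local Open Scope ring_scope.

(* Row sums lambda = (n-k, k), column sums mu = (n-l, l). *)
Definition rowsum (n k : nat) (i : 'I_2) : nat := if val i == 0%N then (n - k)%N else k.
Definition colsum (n l : nat) (j : 'I_2) : nat := if val j == 0%N then (n - l)%N else l.

(* A 2x2 nonnegative integer table (entries are automatically <= n). *)
Definition is_table (n k l : nat) (M : 'M['I_n.+1]_2) : bool :=
  [forall i : 'I_2, (\sum_(j < 2) (M i j : nat))%N == rowsum n k i] &&
  [forall j : 'I_2, (\sum_(i < 2) (M i j : nat))%N == colsum n l j].

Definition tab (n k l : nat) := {M : 'M['I_n.+1]_2 | is_table n k l M}.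

Definition tabE n k l (T : tab n k l) (i j : 'I_2) : nat := val T i j.

Definition piFY (R : realType) n k l (T : tab n k l) : R :=
  ((\prod_(i < 2) ((rowsum n k i)`!)%:R) * (\prod_(j < 2) ((colsum n l j)`!)%:R))
  / ((n`!)%:R * \prod_(i < 2) \prod_(j < 2) ((tabE n k l T i j)`!)%:R).

Definition ind (b : bool) : int := (b : nat)%:Z.

Definition is_move n k l (T T' : tab n k l) (i1 j1 i2 j2 : 'I_2) : bool :=
  [forall i : 'I_2, [forall j : 'I_2,
     ((tabE n k l T' i j)%:Z == (tabE n k l T i j)%:Z
        - ind ((i == i1) && (j == j1)) - ind ((i == i2) && (j == j2))
        + ind ((i == i1) && (j == j2)) + ind ((i == i2) && (j == j1)))]].

(* Off-diagonal transition probability: each move is determined by the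
   unordered pair of rows {i1,i2} (taken with i1 < i2) and the ordered pair of
   distinct columns (j1,j2); its probability is 2 T_{i1 j1} T_{i2 j2} / n^2. *)
Definition Poff (R : realType) n k l (T T' : tab n k l) : R :=
  \sum_(i1 < 2) \sum_(i2 < 2 | (i1 < i2)%N) \sum_(j1 < 2) \sum_(j2 < 2 | j1 != j2)
    (if is_move n k l T T' i1 j1 i2 j2 then
       2 * (tabE n k l T i1 j1)%:R * (tabE n k l T i2 j2)%:R / (n%:R ^+ 2) else 0).

Definition Ptr (R : realType) n k l (T T' : tab n k l) : R :=
  if T' == T then 1 - \sum_(T'' : tab n k l | T'' != T) Poff R n k l T T''
  else Poff R n k l T T'.

Fixpoint Pt (R : realType) n k l (t : nat) (x y : tab n k l) : R :=
  match t with
  | 0 => (x == y)%:R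
  | t'.+1 => \sum_(z : tab n k l) Pt R n k l t' x z * Ptr R n k l z y
  end.

Definition tv (R : realType) n k l (t : nat) (x : tab n k l) : R :=
  \big[Num.max/0]_(A : {set tab n k l})
     `| \sum_(y in A) Pt R n k l t x y - \sum_(y in A) piFY R n k l y |.

Definition chi2 (R : realType) n k l (x : tab n k l) (t : nat) : R :=
  \sum_(y : tab n k l) (Pt R n k l t x y - piFY R n k l y) ^+ 2 / piFY R n k l y.

From HB Require Import structures.
From mathcomp Require Import all_boot all_order all_algebra.
From mathcomp Require Import all_classical all_reals all_analysis.
From mathcomp Require Import zify ring lra.
Import Order.TTheory GRing.Theory Num.Theory.
Set Implicit Arguments.
Unset Strict Implicit.
Unset Printing Implicit Defensive.
Local Open Scope ring_scope.

(* A table of T_{lambda,mu} is determined by its (1,1) entry x in {0, ..., k}, so the chain is a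
   birth-death chain on {0, ..., k}, with up rate 2(l-x)(k-x)/n^2 and down rate 2(n-k-l+x)x/n^2,
   reversible for the hypergeometric law pi.  It maps the falling factorial (x)_m to
   beta_m (x)_m + gamma_m (x)_(m-1) with beta_m = 1 - 2m(n-m+1)/n^2; being triangular in that
   basis it has spectrum beta_0 = 1, beta_1, ..., beta_k, and reversibility turns the averaged
   chi-square distance into tr P^(2t) - 1 = sum_(m=1..k) beta_m^(2t).  The upper bound then
   follows from TV^2 <= chi^2 (Cauchy-Schwarz) and beta_m^2 <= beta_1^2 <= exp(-4/n); the lower
   bound keeps the single term beta_1^(2t) >= 1 - 4t/n (Bernoulli). *)

Definition stochastic_mx (R : nzRingType) N (A : 'M[R]_N) :=
  forall i, \sum_j A i j = 1.

Definition reversible_mx (R : nzRingType) N (p : 'I_N -> R) (A : 'M[R]_N) :=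
  forall i j, p i * A i j = p j * A j i.

Lemma stochastic_mxX (R : nzRingType) N (A : 'M[R]_N.+1) t :
  stochastic_mx A -> stochastic_mx (A ^+ t).
Proof.
move=> stoA; elim: t => [|t IHt] i.
  by rewrite expr0 (bigD1 i) //= mxE eqxx big1 ?addr0 // => j /negbTE ji; rewrite mxE eq_sym ji.
rewrite exprSr -mulmxE; under eq_bigr do rewrite mxE.
rewrite exchange_big /= -[RHS](IHt i); apply: eq_bigr => z _.
by rewrite -mulr_sumr stoA mulr1.
Qed.

Lemma reversible_mxX (R : comNzRingType) N (p : 'I_N.+1 -> R) (A : 'M[R]_N.+1) t :
  reversible_mx p A -> reversible_mx p (A ^+ t).
Proof.
move=> revA; elim: t => [|t IHt] i j.
  by rewrite expr0 !mxE; case: (eqVneq i j) => [->|_]; rewrite ?mulr0.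
rewrite {1}exprSr [in RHS]exprS -!mulmxE !mxE !mulr_sumr; apply: eq_bigr => z _.
by rewrite mulrA IHt -mulrA mulrCA revA mulrCA [(A ^+ t) z i * _]mulrC.
Qed.

Lemma reversible_sum_chi2 (F : fieldType) N (p : 'I_N -> F) (B : 'M[F]_N) :
  (forall i, p i != 0) -> \sum_i p i = 1 -> stochastic_mx B -> reversible_mx p B ->
  \sum_i p i * \sum_j (B i j - p j) ^+ 2 / p j = \tr (B *m B) - 1.
Proof.
move=> p_neq0 sum_p stoB revB.
have term i j : p i * ((B i j - p j) ^+ 2 / p j) = B i j * B j i - 2 * (p i * B i j) + p i * p j.
  have -> : B j i = p i * B i j / p j by rewrite revB mulrC mulKf.
  by field.
under eq_bigr do rewrite mulr_sumr; under eq_bigr do under eq_bigr do rewrite term.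
have row i : \sum_j (B i j * B j i - 2 * (p i * B i j) + p i * p j) = (B *m B) i i - p i.
  by rewrite !big_split sumrN /= -!mulr_sumr stoB sum_p mxE; ring.
by under eq_bigr do rewrite row; rewrite sumrB sum_p.
Qed.

Lemma mxtrace_intertwinedX (R : comUnitRingType) N (A C F : 'M[R]_N.+1) s :
  A *m F = F *m C -> F \in unitmx -> \tr (A ^+ s) = \tr (C ^+ s).
Proof.
move=> AF_FC Funit.
have AsF : A ^+ s *m F = F *m C ^+ s.
  elim: s => [|s IHs]; first by rewrite !expr0 mul1mx mulmx1.
  by rewrite !exprSr -!mulmxE -mulmxA AF_FC mulmxA IHs -mulmxA.
by rewrite -[A ^+ s]mulmx1 -(mulmxV Funit) mulmxA AsF -mulmxA mxtrace_mulC -mulmxA mulVmx // mulmx1.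
Qed.

Section UpperTriangular.
Variables (R : nzRingType) (N : nat) (C : 'M[R]_N.+1).
Hypothesis C_upper : forall i j : 'I_N.+1, (j < i)%N -> C i j = 0.

Lemma upper_trig_mxX s :
  (forall i j : 'I_N.+1, (j < i)%N -> (C ^+ s) i j = 0) /\ (forall i, (C ^+ s) i i = C i i ^+ s).
Proof.
elim: s => [|s [IHlow IHdiag]].
  split=> [i j|i]; rewrite expr0 mxE ?eqxx //.
  by case: eqP => // ->; rewrite ltnn.
split=> [i j ji|i]; rewrite exprSr -mulmxE mxE.
  apply: big1 => z _; case: (ltnP z i) => [zi|iz]; first by rewrite IHlow // mul0r.
  by rewrite C_upper ?mulr0 // (leq_trans ji iz).
rewrite (bigD1 i) //= big1 ?addr0 ?IHdiag ?exprSr // => z /negbTE zi.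
case: (ltngtP z i) => [zi'|iz|/val_inj ezi]; first by rewrite IHlow // mul0r.
  by rewrite C_upper ?mulr0.
by rewrite ezi eqxx in zi.
Qed.

Lemma mxtrace_upper_trigX s : \tr (C ^+ s) = \sum_i C i i ^+ s.
Proof. by apply: eq_bigr => i _; case: (upper_trig_mxX s) => _ ->. Qed.

End UpperTriangular.

Lemma sqr_sum_abs_le (R : realFieldType) (T : finType) (p a : T -> R) :
  (forall y, 0 < p y) -> \sum_y p y = 1 -> (\sum_y `|a y|) ^+ 2 <= \sum_y a y ^+ 2 / p y.
Proof.
move=> p_gt0 sum_p; set S := \sum_y `|a y|.
have dev y : (`|a y| - p y * S) ^+ 2 / p y = a y ^+ 2 / p y - 2 * S * `|a y| + S ^+ 2 * p y.
  by rewrite -[a y ^+ 2]real_normK ?num_real //; field; rewrite gt_eqF.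
have : 0 <= \sum_y (`|a y| - p y * S) ^+ 2 / p y.
  by apply: sumr_ge0 => y _; rewrite divr_ge0 ?sqr_ge0 ?ltW.
under eq_bigr do rewrite dev.
rewrite !big_split sumrN /= -!mulr_sumr sum_p -/S; lra.
Qed.

Lemma tv_le_sum_abs (R : realType) n k l t (x : tab n k l) :
  0 <= tv R n k l t x <= \sum_y `|Pt R n k l t x y - piFY R n k l y|.
Proof.
rewrite /tv; apply/andP; split.
  by apply: le_trans (le_bigmax _ _ finset.set0); rewrite normr_ge0.
apply: bigmax_le => [|A _]; first by rewrite sumr_ge0.
rewrite -sumrB (le_trans (ler_norm_sum _ _ _)) // [leRHS](bigID (mem A)) /=.
by rewrite lerDl sumr_ge0.
Qed.

Lemma bernoulli_ineq (R : realDomainType) (x : R) m : -1 <= x -> 1 + m%:R * x <= (1 + x) ^+ m.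
Proof.
move=> x_ge; elim: m => [|m IHm]; first by rewrite mul0r addr0 expr0.
rewrite exprSr -natr1 (le_trans _ (ler_wpM2r _ IHm)) ?subr_ge0 //; last by lra.
have : 0 <= m%:R * (x * x) :> R by rewrite mulr_ge0 // -expr2 sqr_ge0.
nra.
Qed.

Definition falling (R : nzRingType) (x : R) (m : nat) : R := \prod_(i < m) (x - i%:R).

Lemma fallingS (R : comNzRingType) (x : R) m : falling x m.+1 = falling x m * (x - m%:R).
Proof. by rewrite /falling big_ord_recr. Qed.

Lemma fallingSl (R : comNzRingType) (x : R) m : falling x m.+1 = x * falling (x - 1) m.
Proof.
rewrite /falling big_ord_recl subr0; congr (_ * _); apply: eq_bigr => i _.
by rewrite lift0 -natr1 opprD addrA addrAC.
Qed.

Lemma falling_nat_lt (R : comNzRingType) (x m : nat) : (x < m)%N -> falling (x%:R : R) m = 0.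
Proof. by move=> xm; rewrite /falling (bigD1 (Ordinal xm)) //= subrr mul0r. Qed.

Lemma falling_nat_neq0 (R : numDomainType) m : falling (m%:R : R) m != 0.
Proof.
apply/prodf_neq0 => i _; rewrite subr_eq0 eqr_nat.
by rewrite neq_ltn ltn_ord orbT.
Qed.

Definition falling_mx (R : nzRingType) N : 'M[R]_N := \matrix_(x, m) falling (x%:R : R) m.

Lemma falling_mx_unit (R : numFieldType) N : falling_mx R N \in unitmx.
Proof.
rewrite unitmxE det_trig; last by apply/is_trig_mxP => x m xm; rewrite mxE falling_nat_lt.
by rewrite unitfE; apply/prodf_neq0 => m _; rewrite mxE falling_nat_neq0.
Qed.

Definition beta (F : fieldType) (N : F) (m : nat) : F := 1 - 2 * m%:R * (N - m%:R + 1) / N ^+ 2.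

Definition gamma (F : fieldType) (N a b : F) (m : nat) : F :=
  2 * m%:R * (m%:R - 1 - a) * (m%:R - 1 - b) / N ^+ 2.

Lemma falling_birth_death (F : fieldType) (N a b x : F) m : N != 0 ->
  (1 - 2 * (b - x) * (a - x) / N ^+ 2 - 2 * (N - a - b + x) * x / N ^+ 2) * falling x m
  + 2 * (N - a - b + x) * x / N ^+ 2 * falling (x - 1) m
  + 2 * (b - x) * (a - x) / N ^+ 2 * falling (x + 1) m
  = beta N m * falling x m + gamma N a b m * falling x m.-1.
Proof.
move=> N0; case: m => [|m]; first by rewrite /falling !big_ord0 /beta /gamma; field.
have shift : x * falling (x - 1) m = falling x m * (x - m%:R) by rewrite -fallingSl fallingS.
rewrite fallingS [falling (x - 1) _]fallingS fallingSl addrK /=.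
have -> : 2 * (N - a - b + x) * x / N ^+ 2 * (falling (x - 1) m * (x - 1 - m%:R))
    = 2 * (N - a - b + x) / N ^+ 2 * (x * falling (x - 1) m) * (x - 1 - m%:R) by field.
by rewrite shift /beta /gamma -[m.+1%:R]natr1; field.
Qed.

Lemma beta0 (F : fieldType) (N : F) : beta N 0 = 1.
Proof. by rewrite /beta mulr0 !mul0r subr0. Qed.

Lemma beta1 (F : fieldType) (N : F) : N != 0 -> beta N 1 = 1 - 2 / N.
Proof. by move=> N0; rewrite /beta; field. Qed.

Lemma beta_sqr_le (R : realFieldType) (N : R) m : (1 <= m)%N -> 2 * m%:R <= N ->
  beta N m ^+ 2 <= beta N 1 ^+ 2.
Proof.
move=> m_ge1 mN; have M_ge1 : 1 <= m%:R :> R by rewrite ler1n.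
set M := m%:R : R in M_ge1 mN *.
have N0 : N != 0 by apply: lt0r_neq0; lra.
have diff : beta N 1 - beta N m = 2 * (M - 1) * (N - M) / N ^+ 2 by rewrite /beta; field.
have sum : beta N 1 + beta N m = 2 * (3 * M * (M - 1) + (N - 2 * M) * (N + M - 1)) / N ^+ 2.
  by rewrite /beta; field.
have diff_ge0 : 0 <= beta N 1 - beta N m.
  by rewrite diff divr_ge0 ?sqr_ge0 // !mulr_ge0 //; lra.
have sum_ge0 : 0 <= beta N 1 + beta N m.
  rewrite sum divr_ge0 ?sqr_ge0 //.
  have : 0 <= M * (M - 1) by rewrite mulr_ge0 //; lra.
  have : 0 <= (N - 2 * M) * (N + M - 1) by rewrite mulr_ge0 //; lra.
  nra.
by rewrite -subr_ge0 subr_sqr mulr_ge0.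
Qed.

Lemma beta_exprM_le (R : realType) n m t : (1 <= m)%N -> (2 * m <= n)%N ->
  beta (n%:R : R) m ^+ t.*2 <= expR (- (4 * t%:R / n%:R)).
Proof.
move=> m_ge1 mn; have n_gt0 : 0 < n%:R :> R by rewrite ltr0n; lia.
have beta1_ge0 : 0 <= beta (n%:R : R) 1.
  by rewrite beta1 ?gt_eqF // subr_ge0 ler_pdivrMr // mul1r ler_nat; lia.
have beta1_le : beta (n%:R : R) 1 <= expR (- (2 / n%:R)) by rewrite beta1 ?gt_eqF // expR_ge1Dx.
have mN : 2 * m%:R <= n%:R :> R by rewrite -(ler_nat R) natrM in mn.
rewrite -mul2n !exprM (le_trans (lerXn2r _ _ _ (beta_sqr_le m_ge1 mN))) ?nnegrE ?sqr_ge0 //.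
rewrite -exprM mul2n (le_trans (lerXn2r _ _ _ beta1_le)) ?nnegrE ?expR_ge0 // -expRM_natl.
rewrite -mul2n (_ : (2 * t)%:R * _ = - (4 * t%:R / n%:R)) //.
by rewrite natrM; field; rewrite gt_eqF.
Qed.

Lemma beta1_exprM_ge (R : realType) n t : (2 <= n)%N ->
  1 - 4 * t%:R / n%:R <= beta (n%:R : R) 1 ^+ t.*2.
Proof.
move=> n_ge2; have n_gt0 : 0 < n%:R :> R by rewrite ltr0n; lia.
have x_ge : -1 <= - (2 / n%:R) :> R by rewrite lerN2 ler_pdivrMr // mul1r ler_nat.
rewrite beta1 ?gt_eqF // (le_trans _ (bernoulli_ineq t.*2 x_ge)) // -mul2n.
suff -> : 1 + (2 * t)%:R * - (2 / n%:R) = 1 - 4 * t%:R / n%:R :> R by [].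
by rewrite natrM; field; rewrite gt_eqF.
Qed.

Lemma hypergeom_balance a b c x : (x < c)%N -> (c <= b)%N ->
  ('C(a, x) * 'C(b, c - x) * (c - x) * (a - x)
   = 'C(a, x.+1) * 'C(b, c - x.+1) * (b - c + x.+1) * x.+1)%N.
Proof.
move=> x_lt_c c_le_b; have := mul_bin_left b (c - x.+1).
have -> : (c - x.+1).+1 = (c - x)%N by lia.
have -> : (b - (c - x.+1) = b - c + x.+1)%N by lia.
move=> bin_c; transitivity (((a - x) * 'C(a, x)) * ((c - x) * 'C(b, c - x)))%N.
  by ring.
by rewrite -mul_bin_left bin_c; ring.
Qed.

Lemma ord2_cases (i : 'I_2) : i = ord0 \/ i = ord_max.
Proof. by case: i => [[|[|//]]] ?; [left|right]; apply: val_inj. Qed.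

Lemma big_ord2 (T : Type) (idx : T) (op : Monoid.law idx) (F : 'I_2 -> T) :
  \big[op/idx]_(i < 2) F i = op (F ord0) (F ord_max).
Proof. by rewrite big_ord_recl big_ord1; congr (op _ (F _)); apply: val_inj. Qed.

Lemma sum_ord_if_eq (V : nmodType) N x (G : nat -> V) :
  \sum_(j < N) (if (j : nat) == x then G j else 0) = if (x < N)%N then G x else 0.
Proof.
case: ltnP => [xN|Nx]; last first.
  by rewrite big1 // => j _; rewrite ltn_eqF // (leq_trans (ltn_ord j) Nx).
rewrite (bigD1 (Ordinal xN)) //= eqxx big1 ?addr0 // => j /negbTE jx.
by rewrite ifF //; apply: contraFF jx => /eqP jx; apply/eqP/val_inj.
Qed.

Lemma sum_ord_if_succ_eq (V : nmodType) N x (G : nat -> V) :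
  \sum_(j < N) (if (j.+1 == x)%N then G j else 0) = if (0 < x <= N)%N then G x.-1 else 0.
Proof.
case: x => [|x]; first by rewrite big1.
by under eq_bigr do rewrite eqSS; rewrite sum_ord_if_eq.
Qed.

Section TwoByTwoTables.
Variables (R : realType) (n k l : nat).
Hypotheses (n_gt0 : (0 < n)%N) (k_le_l : (k <= l)%N) (kl_le_n : (k + l <= n)%N).

Local Notation table := (tab n k l).
Local Notation E T i j := (tabE n k l T i j).
Local Notation pi := (piFY R n k l).

Lemma table_margins (T : table) :
  [/\ (E T ord0 ord0 + E T ord0 ord_max = n - k)%N,
      (E T ord_max ord0 + E T ord_max ord_max = k)%N,
      (E T ord0 ord0 + E T ord_max ord0 = n - l)%N
    & (E T ord0 ord_max + E T ord_max ord_max = l)%N].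
Proof.
case: T => M tabM; have /andP[/forallP rows /forallP cols] := tabM; rewrite /tabE /=.
move: (rows ord0) (rows ord_max) (cols ord0) (cols ord_max).
by rewrite !big_ord2 /rowsum /colsum /= => /eqP ? /eqP ? /eqP ? /eqP ?.
Qed.

Definition table_entry (x : nat) (a b : 'I_2) : nat :=
  if a == ord0 then (if b == ord0 then n - k - l + x else l - x)%N
  else (if b == ord0 then k - x else x)%N.

Lemma table_entry_le (x : 'I_k.+1) a b : (table_entry x a b <= n)%N.
Proof. by have := ltn_ord x; rewrite /table_entry; case: (a == ord0); case: (b == ord0); lia. Qed.

Lemma table_entry_is_table (x : 'I_k.+1) :
  is_table n k l (\matrix_(a, b) inord (table_entry x a b)).
Proof.
have := ltn_ord x; rewrite /is_table => x_le; apply/andP; split; apply/forallP => a;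
  rewrite big_ord2 !mxE !inordK ?ltnS ?table_entry_le // /table_entry /rowsum /colsum;
  by case: (ord2_cases a) => ->; rewrite /=; apply/eqP; lia.
Qed.

Definition table_of (x : 'I_k.+1) : table :=
  exist _ (\matrix_(a, b) inord (table_entry x a b)) (table_entry_is_table x).

Definition table_index (T : table) : 'I_k.+1 := inord (E T ord_max ord_max).

Lemma E_table_of x a b : E (table_of x) a b = table_entry x a b.
Proof. by rewrite /tabE /= mxE inordK // ltnS table_entry_le. Qed.

Lemma table_ofK : cancel table_of table_index.
Proof. by move=> x; apply: val_inj; rewrite /table_index E_table_of /table_entry /= inordK. Qed.

Lemma table_eq (T T' : table) : E T ord_max ord_max = E T' ord_max ord_max -> T = T'.
Proof.
move=> e11; apply: val_inj; apply/matrixP => a b; apply: val_inj; change (E T a b = E T' a b).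
have [? ? ? ?] := table_margins T; have [? ? ? ?] := table_margins T'.
by case: (ord2_cases a) => ->; case: (ord2_cases b) => ->; lia.
Qed.

Lemma table_indexK : cancel table_index table_of.
Proof.
move=> T; apply: table_eq; have [_ m11 _ _] := table_margins T.
by rewrite E_table_of /table_entry /table_index /= inordK //; lia.
Qed.

Lemma table_of_bij : bijective table_of.
Proof. by exists table_index; [apply: table_ofK | apply: table_indexK]. Qed.

Lemma sum_table (F : table -> R) : \sum_T F T = \sum_x F (table_of x).
Proof. exact: reindex (onW_bij _ table_of_bij). Qed.

Lemma is_move_down (T T' : table) :
  is_move n k l T T' ord0 ord0 ord_max ord_max
  = (E T' ord_max ord_max + 1 == E T ord_max ord_max)%N.
Proof.
have [? ? ? ?] := table_margins T; have [? ? ? ?] := table_margins T'.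
apply/idP/eqP => [/forallP/(_ ord_max)/forallP/(_ ord_max)/eqP|e11].
  by rewrite /ind /=; lia.
by apply/forallP => a; apply/forallP => b; apply/eqP;
  case: (ord2_cases a) => ->; case: (ord2_cases b) => ->; rewrite /ind /=; lia.
Qed.

Lemma is_move_up (T T' : table) :
  is_move n k l T T' ord0 ord_max ord_max ord0
  = (E T' ord_max ord_max == E T ord_max ord_max + 1)%N.
Proof.
have [? ? ? ?] := table_margins T; have [? ? ? ?] := table_margins T'.
apply/idP/eqP => [/forallP/(_ ord_max)/forallP/(_ ord_max)/eqP|e11].
  by rewrite /ind /=; lia.
by apply/forallP => a; apply/forallP => b; apply/eqP;
  case: (ord2_cases a) => ->; case: (ord2_cases b) => ->; rewrite /ind /=; lia.
Qed.

Definition up_rate (x : nat) : R := 2 * (l - x)%:R * (k - x)%:R / n%:R ^+ 2.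
Definition down_rate (x : nat) : R := 2 * (n - k - l + x)%:R * x%:R / n%:R ^+ 2.

Lemma Poff_table_of (x y : 'I_k.+1) :
  Poff R n k l (table_of x) (table_of y) =
  (if y.+1 == x :> nat then down_rate x else 0) + (if y == x.+1 :> nat then up_rate x else 0).
Proof.
rewrite /Poff; do 4! rewrite ?big_mkcond ?big_ord2 /=.
rewrite big1 ?addr0; last by case=> [[|[|]]].
rewrite is_move_down is_move_up !E_table_of /table_entry /= !addn1 !add0r.
by rewrite /down_rate /up_rate.
Qed.

Lemma up_rate_k : up_rate k = 0.
Proof. by rewrite /up_rate subnn mulr0 mul0r. Qed.

Lemma down_rate0 : down_rate 0 = 0.
Proof. by rewrite /down_rate mulr0 mul0r. Qed.

Definition birth_death_mx : 'M[R]_k.+1 := \matrix_(x, y)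
  ((if y == x :> nat then 1 - up_rate x - down_rate x else 0)
   + (if y.+1 == x :> nat then down_rate x else 0) + (if y == x.+1 :> nat then up_rate x else 0)).

Lemma birth_death_mx_mulr (g : nat -> R) (x : 'I_k.+1) :
  \sum_y birth_death_mx x y * g y
  = (1 - up_rate x - down_rate x) * g x + down_rate x * g x.-1 + up_rate x * g x.+1.
Proof.
under eq_bigr => y _ do rewrite mxE !mulrDl !(fun_if (fun z => z * g y)) !mul0r.
rewrite !big_split /= !(sum_ord_if_eq _ _ (fun j => _ * g j)).
rewrite (sum_ord_if_succ_eq _ _ (fun j => _ * g j)) ltn_ord.
have x_le_k : (x <= k)%N by rewrite -ltnS.
congr (_ + _ + _).
  by case: posnP => [->|_]; rewrite ?down_rate0 ?mul0r // (leq_trans x_le_k).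
case: ltnP => // k_le_x; have -> : (x : nat) = k by lia.
by rewrite up_rate_k !mul0r.
Qed.

Lemma birth_death_mx_stochastic : stochastic_mx birth_death_mx.
Proof.
move=> x; have := birth_death_mx_mulr (fun=> 1) x; under eq_bigr do rewrite mulr1.
by rewrite !mulr1 => ->; ring.
Qed.

Lemma Ptr_table_of x y : Ptr R n k l (table_of x) (table_of y) = birth_death_mx x y.
Proof.
have off z : z != x -> Poff R n k l (table_of x) (table_of z) = birth_death_mx x z.
  by move=> zx; rewrite Poff_table_of mxE (negbTE (_ : z != x :> nat)) ?add0r // (inj_eq val_inj).
rewrite /Ptr (can_eq table_ofK); case: eqVneq => [->|/off //].
rewrite (reindex table_of (onW_bij _ table_of_bij)) /=.
under eq_bigl do rewrite (can_eq table_ofK).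
by rewrite (eq_bigr _ off) -(birth_death_mx_stochastic x) (bigD1 x) //= addrK.
Qed.

Lemma Pt_birth_death_mx t (T T' : table) :
  Pt R n k l t T T' = (birth_death_mx ^+ t) (table_index T) (table_index T').
Proof.
elim: t T' => [|t IHt] T' /=; first by rewrite expr0 mxE (can_eq table_indexK).
rewrite exprSr -mulmxE mxE sum_table; apply: eq_bigr => z _.
by rewrite IHt table_ofK -[in LHS](table_indexK T') Ptr_table_of.
Qed.

Lemma pi_table_of (x : 'I_k.+1) :
  pi (table_of x) = ('C(k, x) * 'C(n - k, l - x))%:R / 'C(n, l)%:R.
Proof.
have x_le_k : (x <= k)%N by rewrite -ltnS.
have fk := bin_fact x_le_k.
have fnk : ('C(n - k, l - x) * ((l - x)`! * (n - k - l + x)`!) = (n - k)`!)%N.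
  by rewrite -(bin_fact (_ : l - x <= n - k)%N); [congr (_ * (_ * _`!)) | ]; lia.
have fn := bin_fact (_ : l <= n)%N.
rewrite /piFY !big_ord2 !E_table_of /rowsum /colsum /table_entry /=.
rewrite -fk -fnk -fn; last by lia.
by rewrite !natrM; field; rewrite !pnatr_eq0 -!lt0n !fact_gt0 bin_gt0; lia.
Qed.

Lemma pi_gt0 T : 0 < pi T.
Proof.
rewrite -(table_indexK T) pi_table_of; have x_le_k : (table_index T <= k)%N by rewrite -ltnS.
by rewrite divr_gt0 // ltr0n ?muln_gt0 !bin_gt0; lia.
Qed.

Lemma sum_pi : \sum_T pi T = 1.
Proof.
have vdm : (\sum_(x < k.+1) 'C(k, x) * 'C(n - k, l - x))%N = 'C(n, l).
  have k_le_n : (k <= n)%N by lia.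
  rewrite -[in RHS](subnKC k_le_n) -binomial.Vandermonde.
  rewrite (big_ord_widen _ (fun x => 'C(k, x) * 'C(n - k, l - x))%N (_ : k.+1 <= l.+1)%N) //.
  rewrite big_mkcond /=.
  by apply: eq_bigr => x _; case: ltnP => // /bin_small->.
rewrite sum_table; under eq_bigr do rewrite pi_table_of.
by rewrite -mulr_suml -natr_sum vdm divff // pnatr_eq0 -lt0n bin_gt0; lia.
Qed.

Lemma pi_balance (x y : 'I_k.+1) : y = x.+1 :> nat ->
  pi (table_of x) * up_rate x = pi (table_of y) * down_rate y.
Proof.
move=> yx; have x_lt_k : (x < k)%N by rewrite -ltnS -yx.
have Cnl : 'C(n, l)%:R != 0 :> R by rewrite pnatr_eq0 -lt0n bin_gt0; lia.
have n0 : n%:R != 0 :> R by rewrite pnatr_eq0 -lt0n.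
rewrite !pi_table_of /up_rate /down_rate yx.
transitivity (2 / ('C(n, l)%:R * n%:R ^+ 2)
              * ('C(k, x) * 'C(n - k, l - x) * (l - x) * (k - x))%:R : R).
  by rewrite !natrM; field; rewrite Cnl n0.
by rewrite hypergeom_balance ?natrM; [field; rewrite Cnl n0 | lia | lia].
Qed.

Lemma birth_death_mx_reversible : reversible_mx (fun x => pi (table_of x)) birth_death_mx.
Proof.
move=> x y; wlog xy : x y / (x <= y)%N.
  by move=> sym; case: (leqP x y) => [/sym//|/ltnW/sym->].
rewrite !mxE; have [/val_inj->//|y_neq_x] := eqVneq (y : nat) x.
have [y_eq|y_neq] := eqVneq (y : nat) x.+1; last by rewrite !ifF ?addr0 ?mulr0 //; lia.
by rewrite y_eq !ifF ?add0r ?addr0 -?y_eq; [exact: pi_balance | lia ..].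
Qed.

Definition falling_coef_mx : 'M[R]_k.+1 := \matrix_(i, j)
  ((if i == j :> nat then beta (n%:R : R) j else 0)
   + (if i.+1 == j :> nat then gamma (n%:R : R) k%:R l%:R j else 0)).

Lemma birth_death_mx_falling :
  birth_death_mx *m falling_mx R k.+1 = falling_mx R k.+1 *m falling_coef_mx.
Proof.
apply/matrixP => x m; rewrite !mxE.
under eq_bigr do rewrite [falling_mx _ _ _ _]mxE.
rewrite (birth_death_mx_mulr (fun y => falling (y%:R : R) m)).
under eq_bigr => j _ do rewrite !mxE mulrDr !(fun_if (fun z => falling (x%:R : R) j * z)) !mulr0.
rewrite big_split /= (sum_ord_if_eq _ _ (fun j => falling (x%:R : R) j * _)).
rewrite (sum_ord_if_succ_eq _ _ (fun j => falling (x%:R : R) j * _)) !ltn_ord.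
have x_le_k : (x <= k)%N by rewrite -ltnS.
have -> : (if (0 < m <= k.+1)%N then falling (x%:R : R) m.-1 * gamma n%:R k%:R l%:R m else 0)
    = falling (x%:R : R) m.-1 * gamma n%:R k%:R l%:R m.
  by case: (posnP m) => [->|_]; rewrite ?(ltnW (ltn_ord m)) // /gamma mulr0 !mul0r mulr0.
have -> : down_rate x * falling (x.-1%:R : R) m = down_rate x * falling (x%:R - 1) m.
  by case: (posnP x) => [->|x_gt0]; rewrite ?down_rate0 ?mul0r // -subn1 natrB.
have [x_le_l l_le_nk k_le_n] : [/\ (x <= l)%N, (l <= n - k)%N & (k <= n)%N].
  by split; lia.
rewrite -[x.+1%:R]natr1 /up_rate /down_rate natrD !natrB //.
rewrite falling_birth_death ?pnatr_eq0 -?lt0n //.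
by rewrite addrC [RHS]addrC !(mulrC (falling _ _)).
Qed.

Lemma mxtrace_birth_death_mxX s :
  \tr (birth_death_mx ^+ s) = \sum_(m < k.+1) beta (n%:R : R) m ^+ s.
Proof.
rewrite (mxtrace_intertwinedX _ birth_death_mx_falling (falling_mx_unit _ _)) mxtrace_upper_trigX.
  by apply: eq_bigr => m _; rewrite mxE eqxx ifF ?addr0 // gtn_eqF.
by move=> i j ji; rewrite mxE (gtn_eqF ji) (@gtn_eqF j i.+1 (ltnW ji)) add0r.
Qed.

Lemma sum_pi_chi2 t :
  \sum_T pi T * chi2 R n k l T t = \sum_(m < k) beta (n%:R : R) m.+1 ^+ t.*2.
Proof.
rewrite sum_table; under eq_bigr => x _ do rewrite /chi2 sum_table.
under eq_bigr => x _ do under eq_bigr => y _ do rewrite Pt_birth_death_mx !table_ofK.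
have pi_neq0 x : pi (table_of x) != 0 by rewrite gt_eqF ?pi_gt0.
rewrite reversible_sum_chi2 //.
- rewrite mulmxE -exprD addnn mxtrace_birth_death_mxX big_ord_recl beta0 expr1n addrC addKr.
  by under eq_bigr do rewrite lift0.
- by rewrite -sum_table sum_pi.
- exact/stochastic_mxX/birth_death_mx_stochastic.
- exact/reversible_mxX/birth_death_mx_reversible.
Qed.

Lemma sum_pi_tv2_le t :
  \sum_T pi T * tv R n k l t T ^+ 2 <= \sum_T pi T * chi2 R n k l T t.
Proof.
apply: ler_sum => T _; rewrite ler_pM2l ?pi_gt0 //.
have /andP[tv_ge0 tv_le] := tv_le_sum_abs R t T.
apply: le_trans (sqr_sum_abs_le _ pi_gt0 sum_pi).
by rewrite lerXn2r // nnegrE (le_trans tv_ge0).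
Qed.

Lemma sum_pi_tv2_le_expR t :
  \sum_T pi T * tv R n k l t T ^+ 2 <= k%:R * expR (- (4 * t%:R / n%:R)).
Proof.
apply: le_trans (sum_pi_tv2_le t) _; rewrite sum_pi_chi2.
have beta_le (m : 'I_k) : beta (n%:R : R) m.+1 ^+ t.*2 <= expR (- (4 * t%:R / n%:R)).
  by apply: beta_exprM_le => //; have := ltn_ord m; lia.
apply: le_trans (ler_sum _ (fun m _ => beta_le m)) _.
by rewrite sumr_const card_ord [leRHS]mulr_natl.
Qed.

Lemma sum_pi_chi2_ge t : (1 <= k)%N -> 1 - 4 * t%:R / n%:R <= \sum_T pi T * chi2 R n k l T t.
Proof.
move=> k_ge1; rewrite sum_pi_chi2 (bigD1 (Ordinal k_ge1)) //= -[leLHS]addr0 lerD //.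
  by apply: beta1_exprM_ge; lia.
by apply: sumr_ge0 => m _; rewrite exprn_even_ge0 // odd_double.
Qed.

End TwoByTwoTables.

Theorem lemma3p2 (R : realType) (n k l : nat) :
  (1 <= k)%N -> (k <= l)%N -> (l <= n./2)%N ->
  (forall (c : R) (t : nat), 0 < c ->
     t%:R = n%:R / 4 * (ln k%:R + c) ->
     \sum_(x : tab n k l) piFY R n k l x * tv R n k l t x ^+ 2 <= expR (- c)) /\
  (forall (c : R) (t : nat), 0 < c ->
     t%:R = c * n%:R / 4 ->
     1 - c <= \sum_(x : tab n k l) piFY R n k l x * chi2 R n k l x t).
Proof.
move=> k_ge1 k_le_l l_le_half.
have n_gt0 : (0 < n)%N by lia.
have kl_le_n : (k + l <= n)%N by lia.
have n_neq0 : n%:R != 0 :> R by rewrite pnatr_eq0 -lt0n.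
split=> c t _ t_def.
- have -> : expR (- c) = k%:R * expR (- (4 * t%:R / n%:R)).
    rewrite t_def (_ : 4 * _ / _ = ln k%:R + c); last by field.
    rewrite opprD expRD (expRN (ln _)) lnK ?posrE ?ltr0n // mulrA mulfV ?mul1r //.
    by rewrite pnatr_eq0 -lt0n.
  exact: sum_pi_tv2_le_expR.
- have -> : c = 4 * t%:R / n%:R by rewrite t_def; field.
  exact: sum_pi_chi2_ge.
Qed.
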